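(* Let $C\subseteq\{0,1\}^m$ be a code and let $t:[m]\to\mathbb{Z}$ be any function. For $s\in\mathbb{Z}$ let $I_s=t^{-1}(s)\subseteq[m]$. For a nonzero $c\in C$ let $\mathrm{type}(c)=\max\{t(i): c_i=1\}$, and for $s\in\mathbb{Z}$ let $C_s=\{c\in C\setminus\{0\} : \mathrm{type}(c)=s\}$. Then \[ \sum_{s\in\mathbb{Z}} \mathrm{CL}\big((C_s\cup C_{s+1})|_{I_s}\big)\le 2\,\mathrm{CL}(C). \]
   Context: For $S\subseteq[m]$ and $D\subseteq\{0,1\}^m$, $D|_S=\{c|_S : c\in D\}\subseteq\{0,1\}^S$. A chain of length $\ell$ in a code $D\subseteq\{0,1\}^A$ is a pair of injective maps $a:[\ell]\to A$ and $c:[\ell]\to D$ such that $c(i)_{a(i)}=1$ for all $i$, and $c(i)_{a(j)}=0$ for all $1\le i<j\le\ell$; the chain length $\mathrm{CL}(D)$ is the maximum length of a chain in $D$ ($0$ if none exists, in particular for $D$ empty). *)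

From mathcomp Require Import all_boot all_order all_algebra.
Set Implicit Arguments. Unset Strict Implicit. Unset Printing Implicit Defensive.
Import Order.TTheory GRing.Theory Num.Theory.

(* Words in {0,1}^A are finite functions A -> bool (true = 1). *)
Definition word (A : finType) := {ffun A -> bool}.

Definition has_chain (A : finType) (D : {set word A}) (l : nat) : bool :=
  [exists a : {ffun 'I_l -> A}, exists c : {ffun 'I_l -> word A},
    [&& injectiveb a, injectiveb c,
        [forall i : 'I_l, c i \in D],
        [forall i : 'I_l, c i (a i)] &
        [forall i : 'I_l, forall j : 'I_l, ((i : nat) < j)%N ==> ~~ c i (a j)]]].

(* Chain length: maximal length of a chain (a chain has length <= #|A| by
   injectivity of a; length 0 is the vacuous chain, so CL = 0 if none). *)
Definition CL (A : finType) (D : {set word A}) : nat :=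
  \max_(l < #|A|.+1 | has_chain D l) l.

Definition sub_of (m : nat) (S : {set 'I_m}) : finType := {x : 'I_m | x \in S}.

Definition restr (m : nat) (S : {set 'I_m}) (D : {set word 'I_m})
  : {set word (sub_of S)} :=
  [set [ffun x : sub_of S => (c : word 'I_m) (val x)] | c in D].

Definition Iset (m : nat) (t : 'I_m -> int) (s : int) : {set 'I_m} :=
  [set i | t i == s].

(* c is nonzero and type(c) = max { t i : c_i = 1 } = s *)
Definition has_type (m : nat) (t : 'I_m -> int) (c : word 'I_m) (s : int) : bool :=
  [exists i, c i && (t i == s)] && [forall i, c i ==> (t i <= s)%R].

Definition Ctype (m : nat) (t : 'I_m -> int) (C : {set word 'I_m}) (s : int)
  : {set word 'I_m} :=
  [set c in C | has_type t c s].

From mathcomp Require Import all_boot all_order all_algebra zify.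
Import Order.TTheory GRing.Theory Num.Theory.
Set Implicit Arguments. Unset Strict Implicit. Unset Printing Implicit Defensive.

(* Concatenate chains of the restricted codes in increasing order of s. An
   element of (C_s u C_{s+1})|_{I_s} is the restriction of a codeword of type at
   most s + 1, which vanishes on every I_{s'} with s' >= s + 2; so when the
   chosen values of s are pairwise at least 2 apart, the concatenation is a
   chain of C and the sum of their lengths is at most CL(C). The values of s of
   each parity are so spaced, which gives the factor 2. *)

(* A chain listed as its sequence of pairs (a(i), c(i)). *)
Definition is_chain (A : finType) (D : {set word A}) (s : seq (A * word A)) : bool :=
  all (fun p : A * word A => (p.2 \in D) && p.2 p.1) s
  && pairwise (fun p q : A * word A => ~~ p.2 q.1) s.

Lemma is_chainS (A : finType) (D D' : {set word A}) s :
  D \subset D' -> is_chain D s -> is_chain D' s.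
Proof.
move=> /subsetP sDD' /andP[Ds pw]; apply/andP; split=> //.
by apply/allP => p /(allP Ds) /andP[/sDD' -> ->].
Qed.

Lemma is_chain_cat (A : finType) (D : {set word A}) s1 s2 :
  is_chain D s1 -> is_chain D s2 -> allrel (fun p q : A * word A => ~~ p.2 q.1) s1 s2 ->
  is_chain D (s1 ++ s2).
Proof.
case/andP=> D1 pw1 /andP[D2 pw2] off12.
by rewrite /is_chain all_cat pairwise_cat D1 D2 pw1 pw2 off12.
Qed.

Lemma pairwise_enum_ord k (r : rel 'I_k) :
  (forall i j : 'I_k, (i < j)%N -> r i j) -> pairwise r (enum 'I_k).
Proof.
move=> rlt; apply: (sub_pairwise (r := relpre val ltn)) => //.
rewrite -pairwise_map val_enum_ord -sorted_pairwise; last exact: ltn_trans.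
exact: iota_ltn_sorted.
Qed.

Lemma has_chain0 (A : finType) (D : {set word A}) : has_chain D 0.
Proof.
have a0 : {ffun 'I_0 -> A} by apply: finfun; case.
apply/existsP; exists a0; apply/existsP; exists [ffun _ => [ffun _ => false]].
by apply/and5P; split; [apply/injectiveP|apply/injectiveP|apply/forallP..]; case.
Qed.

Lemma has_chain_leq_card (A : finType) (D : {set word A}) l :
  has_chain D l -> (l <= #|A|)%N.
Proof.
case/existsP=> a /existsP[c /and5P[/injectiveP inj_a _ _ _ _]].
by rewrite -[l]card_ord (leq_card _ inj_a).
Qed.

Lemma leq_CL (A : finType) (D : {set word A}) l : has_chain D l -> (l <= CL D)%N.
Proof.
move=> chl; have lA : (l < #|A|.+1)%N by rewrite ltnS (has_chain_leq_card chl).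
exact: (@leq_bigmax_cond _ (fun k : 'I_#|A|.+1 => has_chain D k) val (Ordinal lA) chl).
Qed.

Lemma has_chain_CL (A : finType) (D : {set word A}) : has_chain D (CL D).
Proof.
have chains_gt0 : (0 < #|[pred l : 'I_#|A|.+1 | has_chain D l]|)%N.
  by apply/card_gt0P; exists ord0; rewrite inE /= has_chain0.
have [l chl CLl] := eq_bigmax_cond val chains_gt0.
suff -> : CL D = l by rewrite inE in chl.
by rewrite -CLl /CL; apply: eq_bigl => k; rewrite inE.
Qed.

Lemma is_chain_has_chain (A : finType) (D : {set word A}) s :
  is_chain D s -> has_chain D (size s).
Proof.
case: s => [|p0 s'] chs; first exact: has_chain0.
set s := p0 :: s' in chs *; set n := size s; case/andP: chs => on_s off_s.
pose a := [ffun i : 'I_n => (nth p0 s i).1].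
pose c := [ffun i : 'I_n => (nth p0 s i).2].
have on_c (i : 'I_n) : (c i \in D) && c i (a i) by rewrite !ffunE; apply: (all_nthP p0 on_s).
have off_c (i j : 'I_n) : (i < j)%N -> ~~ c i (a j).
  by move=> ij; rewrite !ffunE; apply: (pairwiseP p0 off_s); rewrite ?inE.
have inj_lt (B : eqType) (f : 'I_n -> B) :
    (forall i j : 'I_n, (i < j)%N -> f i != f j) -> injective f.
  by move=> neq i j fij; case: (ltngtP i j) => [/neq|/neq|/ord_inj //]; rewrite fij eqxx.
apply/existsP; exists a; apply/existsP; exists c; apply/and5P; split.
- apply/injectiveP/inj_lt => i j /off_c; apply: contraNneq => <-.
  by case/andP: (on_c i).
- apply/injectiveP/inj_lt => i j /off_c; apply: contraNneq => ->.
  by case/andP: (on_c j).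
- by apply/forallP => i; case/andP: (on_c i).
- by apply/forallP => i; case/andP: (on_c i).
- by apply/forallP => i; apply/forallP => j; apply/implyP/off_c.
Qed.

Lemma chain_size_leq_CL (A : finType) (D : {set word A}) s :
  is_chain D s -> (size s <= CL D)%N.
Proof. by move/is_chain_has_chain/leq_CL. Qed.

Lemma restr_chain m (S : {set 'I_m}) (D : {set word 'I_m}) k :
  has_chain (restr S D) k ->
  exists s, [/\ is_chain D s, size s = k & all (fun p => p.1 \in S) s].
Proof.
case/existsP=> a /existsP[c /and5P[_ _ /forallP c_restr /forallP on_c /forallP off_c]].
have lift_c i : exists d : word 'I_m, (d \in D) && (c i == [ffun x : sub_of S => d (val x)]).
  by case/imsetP: (c_restr i) => d Dd ->; exists d; rewrite Dd eqxx.
pose d i := xchoose (lift_c i).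
have Dd i : d i \in D by case/andP: (xchooseP (lift_c i)).
have dE i x : d i (val x) = c i x.
  by case/andP: (xchooseP (lift_c i)) => _ /eqP ->; rewrite ffunE.
exists [seq (val (a i), d i) | i <- enum 'I_k]; split.
- rewrite /is_chain all_map pairwise_map; apply/andP; split.
    by apply/allP => i _ /=; rewrite Dd dE on_c.
  apply: pairwise_enum_ord => i j ij /=.
  by rewrite dE; move/forallP: (off_c i) => /(_ j) /implyP; apply.
- by rewrite size_map size_enum_ord.
- by rewrite all_map; apply/allP => i _ /=; exact: valP (a i).
Qed.

Lemma restr_CL_chain m (S : {set 'I_m}) (D : {set word 'I_m}) :
  exists s, [/\ is_chain D s, size s = CL (restr S D) & all (fun p => p.1 \in S) s].
Proof. exact/restr_chain/has_chain_CL. Qed.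

Local Open Scope ring_scope.

Section Windows.

Variables (m : nat) (t : 'I_m -> int) (C : {set word 'I_m}).

Definition window (s : int) : {set word 'I_m} := Ctype t C s :|: Ctype t C (s + 1).

Lemma window_sub s : window s \subset C.
Proof. by apply/subsetP => c; rewrite !inE => /orP[] /andP[]. Qed.

Lemma window_zero_above s c i : c \in window s -> s + 1 < t i -> ~~ c i.
Proof.
rewrite !inE => /orP[] /and3P[_ _ /forallP/(_ i)]; case: (c i) => //= type_le.
  by rewrite ltNge (le_trans type_le) ?lerDl.
by rewrite ltNge type_le.
Qed.

Lemma spaced_windows_chain (r : seq int) :
  pairwise (fun x y => x + 2 <= y) r ->
  exists s, [/\ is_chain C s,
    size s = (\sum_(x <- r) CL (restr (Iset t x) (window x)))%N
    & all (fun p => t p.1 \in r) s].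
Proof.
elim: r => [|x r IHr] /=; first by exists [::]; rewrite big_nil.
case/andP=> x_below_r /IHr[s [chs sz_s s_in_r]].
have [sx [chx sz_sx sx_in_x]] := restr_CL_chain (Iset t x) (window x).
exists (sx ++ s); split.
- apply: is_chain_cat (is_chainS (window_sub x) chx) chs _.
  apply/allrelP => p q p_sx q_s.
  have /andP[p_win _] := allP (andP chx).1 p p_sx.
  apply: window_zero_above p_win _.
  by move: (allP x_below_r _ (allP s_in_r q q_s)) => /=; lia.
- by rewrite size_cat sz_sx sz_s big_cons.
- rewrite all_cat; apply/andP; split; apply/allP => p.
    by move/(allP sx_in_x); rewrite !inE => ->.
  by move/(allP s_in_r); rewrite inE => ->; rewrite orbT.
Qed.

Lemma sum_spaced_windows_CL (r : seq int) : uniq r ->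
  {in r &, forall x y, x < y -> x + 2 <= y} ->
  (\sum_(x <- r) CL (restr (Iset t x) (window x)) <= CL C)%N.
Proof.
move=> uniq_r spaced_r.
rewrite -(perm_big _ (permEl (perm_sort <=%O r))).
have spaced_sort : pairwise (fun x y => x + 2 <= y) (sort <=%O r).
  apply: (sub_in_pairwise (P := mem r) (r := <%O)).
  - by move=> x y xr yr; apply: spaced_r.
  - by apply/allP => x; rewrite mem_sort.
  - by rewrite -sorted_pairwise ?sort_lt_sorted //; exact: lt_trans.
have [s [chs <- _]] := spaced_windows_chain spaced_sort.
exact: chain_size_leq_CL.
Qed.

End Windows.

Theorem mainTheorem9 (m : nat) (C : {set word 'I_m}) (t : 'I_m -> int) :
  (\sum_(s <- undup [seq t i | i <- enum 'I_m])
      CL (restr (Iset t s) (Ctype t C s :|: Ctype t C (s + 1)%R)) <= 2 * CL C)%N.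
Proof.
set even := fun s : int => (s %% 2)%Z == 0.
rewrite (bigID even) /= -big_filter -(big_filter _ (predC even)) mul2n -addnn.
apply: leq_add; apply: sum_spaced_windows_CL; rewrite ?filter_uniq ?undup_uniq //;
  by move=> x y; rewrite !mem_filter /= /even => /andP[+ _] /andP[+ _]; lia.
Qed.
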